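(* Let $G$ be a $2$-edge-connected graph, $C\in\mathrm{CP}(G)$, and $G'$ a connected component of $G-C$ that contains at least one edge. If $C'\in\mathrm{CP}(G')$ is not a coparallel class of $G$, then $C'=C_1\,\dot\cup\, C_2$ for two coparallel classes $C_1,C_2\in\mathrm{CP}(G)$.
   Context: All graphs are finite, simple and undirected. For $\emptyset\subsetneq S\subsetneq V(G)$, $\delta(S)$ is the set of edges with exactly one endpoint in $S$ (a cut). An edge $e$ is a bridge if $\{e\}=\delta(S)$ for some $S$. A graph is $2$-edge-connected if it is connected and has no bridges. Two distinct edges $e,f$ are coparallel if $\{e,f\}$ is an inclusion-wise minimal cut. A coparallel class is an inclusion-wise maximal set of non-bridge edges any two distinct elements of which are coparallel (a non-bridge edge in no $2$-cut forms a singleton class). $\mathrm{CP}(G)$ is the set of coparallel classes of $G$. $G-C$ denotes $G$ with the edges of $C$ deleted. *)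

From mathcomp Require Import all_boot.
Set Implicit Arguments. Unset Strict Implicit. Unset Printing Implicit Defensive.

Section Graphs.
Variable V : finType.

Definition is_graph (W : {set V}) (E : {set {set V}}) : Prop :=
  forall e, e \in E -> #|e| = 2 /\ e \subset W.

Definition adj (E : {set {set V}}) : rel V := fun x y => [set x; y] \in E.

Definition delta (E : {set {set V}}) (S : {set V}) : {set {set V}} :=
  [set e in E | #|e :&: S| == 1].

Definition is_cut (W : {set V}) (E : {set {set V}}) (F : {set {set V}}) : Prop :=
  exists S : {set V}, [/\ S \subset W, S != set0, S != W & F = delta E S].

Definition bridge (W : {set V}) (E : {set {set V}}) (e : {set V}) : Prop := e \in E /\ is_cut W E [set e].

Definition connected_graph (W : {set V}) (E : {set {set V}}) : Prop :=
  W != set0 /\ forall x y, x \in W -> y \in W -> connect (adj E) x y.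

Definition two_edge_connected (W : {set V}) (E : {set {set V}}) : Prop :=
  connected_graph W E /\ forall e, ~ bridge W E e.

Definition min_cut (W : {set V}) (E : {set {set V}}) (F : {set {set V}}) : Prop :=
  is_cut W E F /\ forall F', is_cut W E F' -> F' \proper F -> False.

Definition coparallel (W : {set V}) (E : {set {set V}}) (e f : {set V}) : Prop :=
  e != f /\ min_cut W E [set e; f].

Definition coparallel_set (W : {set V}) (E : {set {set V}}) (D : {set {set V}}) : Prop :=
  D \subset E /\ (forall e, e \in D -> ~ bridge W E e) /\
  (forall e f, e \in D -> f \in D -> e != f -> coparallel W E e f).

Definition cp_class (W : {set V}) (E : {set {set V}}) (D : {set {set V}}) : Prop :=
  [/\ D != set0, coparallel_set W E D &
      forall D', coparallel_set W E D' -> D \subset D' -> D' = D].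

Definition component_of (E : {set {set V}}) (x : V) : {set V} :=
  [set y | connect (adj E) x y].

Definition edges_in (E : {set {set V}}) (W : {set V}) : {set {set V}} :=
  [set e in E | e \subset W].
End Graphs.

From mathcomp Require Import all_boot.
Set Implicit Arguments. Unset Strict Implicit. Unset Printing Implicit Defensive.

(* The edge cuts delta(S) form a GF(2)-space under symmetric difference, so
   "e = f or {e, f} is a cut" is an equivalence whose classes are exactly the
   coparallel classes of a 2-edge-connected graph.  A cut of the component G'
   is delta_G(S) \ C for some S inside G'; as any two edges of C form a cut,
   delta_G(S) can be reduced modulo C to a cut of G meeting C in at most one
   fixed edge c.  Two consequences: every G-class of an edge of G' lies in
   its G'-class, and if f and g are G'-equivalent to e but not G-equivalent
   to e, then {c} + {e, f} and {c} + {e, g} are cuts of G whose sum is the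
   cut {f, g}.  So a G'-class meets at most two G-classes. *)
Section Symdiff.
Variable T : finType.
Implicit Types (A B : {set T}) (a b : T).

Definition symdiff A B : {set T} := [set z | (z \in A) (+) (z \in B)].

Lemma in_symdiff A B z : (z \in symdiff A B) = (z \in A) (+) (z \in B).
Proof. by rewrite inE. Qed.

Lemma symdiff_set1 a b : a != b -> symdiff [set a] [set b] = [set a; b].
Proof.
move=> ab; apply/setP=> z; rewrite !(in_symdiff, inE).
by case: (eqVneq z a) => [->|//]; rewrite (negbTE ab).
Qed.

Lemma card_set2I_eq1 a b A :
  a != b -> (#|[set a; b] :&: A| == 1) = (a \in A) (+) (b \in A).
Proof.
move=> ab; case aA: (a \in A); case bA: (b \in A) => /=.
- by rewrite (setIidPl _) ?cards2 ?ab // subUset !sub1set aA bA.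
- suff -> : [set a; b] :&: A = [set a] by rewrite cards1.
  apply/setP=> z; rewrite !inE.
  by case: (eqVneq z a) => [->|_ /=]; [|case: eqP => // ->].
- suff -> : [set a; b] :&: A = [set b] by rewrite cards1.
  apply/setP=> z; rewrite !inE.
  by case: (eqVneq z b) => [->|_]; rewrite ?orbT ?orbF //; case: eqP => // ->.
- suff -> : [set a; b] :&: A = set0 by rewrite cards0.
  apply/setP=> z; rewrite !inE.
  by case: (eqVneq z a) => [->|_]; [|case: eqP => // ->].
Qed.
End Symdiff.

Section Cocycles.
Variable V : finType.
Implicit Types (E F D : {set {set V}}) (S T W : {set V}) (c d e f g : {set V}).

Definition cocycle E F : bool := [exists S, delta E S == F].

Lemma cocycleP E F : reflect (exists S, delta E S = F) (cocycle E F).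
Proof. by apply: (iffP existsP) => -[S /eqP dS]; exists S; rewrite ?dS. Qed.

Lemma delta_subset E S : delta E S \subset E.
Proof. by apply/subsetP=> e; rewrite inE => /andP[]. Qed.

Lemma delta_set0 E : delta E set0 = set0.
Proof. by apply/setP=> e; rewrite !inE setI0 cards0 andbF. Qed.

Lemma delta_graph W E : is_graph W E -> delta E W = set0.
Proof.
move=> gE; apply/setP=> e; rewrite !inE; apply/andP=> -[/gE[e2 eW]].
by rewrite (setIidPl eW) e2.
Qed.

Lemma delta_setIW W E S : is_graph W E -> delta E (S :&: W) = delta E S.
Proof.
move=> gE; apply/setP=> e; rewrite !inE; case eE: (e \in E) => //=.
by rewrite (setIC S) setIA (setIidPl (gE e eE).2).
Qed.

Lemma delta_sub E1 E2 S : E1 \subset E2 -> delta E1 S = delta E2 S :&: E1.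
Proof.
move=> sE; apply/setP=> e; rewrite !inE; case eE: (e \in E1); last by rewrite andbF.
by rewrite (subsetP sE e eE) andbT.
Qed.

Lemma delta_symdiff E S T : {in E, forall e, #|e| = 2} ->
  delta E (symdiff S T) = symdiff (delta E S) (delta E T).
Proof.
move=> E2; apply/setP=> e; rewrite !(in_symdiff, inE).
case eE: (e \in E) => //=; have /eqP/cards2P[a [b [ab ->]]] := E2 e eE.
by rewrite !card_set2I_eq1 // !in_symdiff addbACA.
Qed.

Lemma cocycle0 E : cocycle E set0.
Proof. by apply/cocycleP; exists set0; rewrite delta_set0. Qed.

Lemma cocycle_symdiff E F1 F2 : {in E, forall e, #|e| = 2} ->
  cocycle E F1 -> cocycle E F2 -> cocycle E (symdiff F1 F2).
Proof.
move=> E2 /cocycleP[S <-] /cocycleP[T <-].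
by apply/cocycleP; exists (symdiff S T); rewrite delta_symdiff.
Qed.

Lemma cocycleI E1 E2 F : E1 \subset E2 -> cocycle E2 F -> cocycle E1 (F :&: E1).
Proof.
by move=> sE /cocycleP[S <-]; apply/cocycleP; exists S; rewrite (delta_sub _ sE).
Qed.

(* [copar E e f] holds iff e = f or {e, f} is a cut; it is an equivalence
   relation because cuts are closed under symmetric difference. *)
Definition copar E : rel {set V} := fun e f => cocycle E (symdiff [set e] [set f]).

Lemma coparxx E e : copar E e e.
Proof.
rewrite /copar (_ : symdiff _ _ = set0) ?cocycle0 //.
by apply/setP=> z; rewrite in_symdiff addbb inE.
Qed.

Lemma copar_sym E e f : copar E e f = copar E f e.
Proof. by rewrite /copar; congr cocycle; apply/setP=> z; rewrite !in_symdiff addbC. Qed.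

Lemma copar_trans E e f g : {in E, forall e, #|e| = 2} ->
  copar E e f -> copar E f g -> copar E e g.
Proof.
move=> E2 cef cfg; have := cocycle_symdiff E2 cef cfg.
by congr cocycle; apply/setP=> z; rewrite !in_symdiff addbA addbK.
Qed.

Lemma coparE E e f : e != f -> copar E e f = cocycle E [set e; f].
Proof. by move=> ef; rewrite /copar symdiff_set1. Qed.

Definition copar_class E e := [set f in E | copar E e f].

Lemma in_copar_class E e f : (f \in copar_class E e) = (f \in E) && copar E e f.
Proof. by rewrite inE. Qed.

Lemma copar_class_disjoint E e f : {in E, forall e, #|e| = 2} ->
  ~~ copar E e f -> [disjoint copar_class E e & copar_class E f].
Proof.
move=> E2 nef; rewrite -setI_eq0; apply/set0Pn=> -[g].
rewrite inE !in_copar_class => /andP[/andP[_ ceg] /andP[_ cfg]].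
by move: nef; rewrite (copar_trans E2 ceg) // copar_sym.
Qed.

(* Adding the cuts {c, d} for the edges d != c of D in F clears D out of F,
   except possibly for c. *)
Lemma cocycle_setD_class E D F c :
  {in E, forall e, #|e| = 2} -> c \in D -> {in D, forall d, copar E c d} ->
  cocycle E F -> cocycle E (F :\: D) \/ cocycle E (symdiff [set c] (F :\: D)).
Proof.
move=> E2 cD copD; have [n] := ubnP #|F :&: (D :\ c)|.
elim: n F => // n IHn F; rewrite ltnS => leFn cF.
have [FD0 | [d]] := set_0Vmem (F :&: (D :\ c)).
  have FDc z : z \in F -> z \in D -> z = c.
    move=> zF zD; apply/eqP/negPn/negP=> zc.
    by have := in_set0 z; rewrite -FD0 !inE zF zD zc.
  case: (boolP (c \in F)) => cF'; [right | left]; congr cocycle: cF;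
    apply/setP=> z; rewrite !(in_symdiff, inE);
    case: (boolP (z \in D)) => zD; rewrite ?andbF ?andbT ?addbF //=.
  - by apply/idP/eqP=> [/FDc/(_ zD)|->].
  - have zc : z != c by apply: contraNneq zD => ->.
    by rewrite (negbTE zc).
  - by apply/negbTE; apply: contra cF' => zF; rewrite -(FDc z zF zD).
rewrite !inE => /and3P[dF dc dD].
pose F' := symdiff F (symdiff [set c] [set d]).
have F'D : F' :\: D = F :\: D.
  apply/setP=> z; rewrite !(in_symdiff, inE).
  case: (boolP (z \in D)) => zD; rewrite ?andbF ?andbT //=.
  have zc : z != c by apply: contraNneq zD => ->.
  have zd : z != d by apply: contraNneq zD => ->.
  by rewrite (negbTE zc) (negbTE zd) !addbF.
rewrite -F'D; apply: IHn; last exact: cocycle_symdiff E2 cF (copD d dD).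
suff F'Dc : F' :&: (D :\ c) = (F :&: (D :\ c)) :\ d.
  by rewrite F'Dc; apply: leq_trans leFn; rewrite [ltnRHS](cardsD1 d) !inE dF dc dD.
apply/setP=> z; rewrite !(in_symdiff, inE).
have [->|zc] := eqVneq z c; first by rewrite /= !andbF.
have [->|zd] := eqVneq z d; first by rewrite dF /= ?andbF.
by rewrite /= !addbF.
Qed.

End Cocycles.

Section CutConnected.
Variable V : finType.
Implicit Types (E : {set {set V}}) (S W : {set V}).

Definition two_edge_cut_connected W E :=
  forall S, S \subset W -> #|delta E S| <= 1 -> S = set0 \/ S = W.

Lemma graph_card2 W E : is_graph W E -> {in E, forall e : {set V}, #|e| = 2}.
Proof. by move=> gE e /gE[]. Qed.

Lemma closed_delta0 E S : delta E S = set0 -> closed (adj E) S.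
Proof.
move=> dS; have inS u v : adj E u v -> u \in S -> v \in S.
  move=> uv uS; apply/negPn/negP=> vS.
  have nuv : u != v by apply: contraNneq vS => <-.
  have : [set u; v] \in delta E S by rewrite inE card_set2I_eq1 // uS (negbTE vS) andbT.
  by rewrite dS inE.
move=> u v uv; apply/idP/idP; apply: inS => //.
by rewrite /adj setUC.
Qed.

Lemma two_edge_cut_connected_of W E :
  two_edge_connected W E -> two_edge_cut_connected W E.
Proof.
move=> [[_ conW] nobridge] S sSW; rewrite leq_eqVlt ltnS leqn0 cards_eq0.
case: (eqVneq S set0) => [->|/set0Pn[y yS]]; first by left.
case: (eqVneq S W) => [->|SW]; first by right.
case/orP=> [/cards1P[b dS] | /eqP dS]; exfalso.
  apply: (nobridge b); split; first by rewrite -sub1set -dS delta_subset.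
  by exists S; split => //; apply/set0Pn; exists y.
have [z zW zS] : exists2 z, z \in W & z \notin S.
  by apply/subsetPn; apply: contra SW => sWS; rewrite eqEsubset sSW.
have := closed_connect (closed_delta0 dS) (conW y z (subsetP sSW y yS) zW).
by rewrite yS (negbTE zS).
Qed.
End CutConnected.

Section Classes.
Variables (V : finType) (W : {set V}) (E : {set {set V}}).
Hypotheses (graphE : is_graph W E) (cutE : two_edge_cut_connected W E).
Implicit Types (D F : {set {set V}}) (b d e f : {set V}).

Lemma is_cut_cocycle F : cocycle E F -> F != set0 -> is_cut W E F.
Proof.
case/cocycleP=> S <- dS0; exists (S :&: W); rewrite subsetIr delta_setIW //.
split=> //; apply: contra_neq dS0 => S0.
  by rewrite -(delta_setIW _ graphE) S0 delta_set0.
by rewrite -(delta_setIW _ graphE) S0 delta_graph.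
Qed.

Lemma is_cut_card F : is_cut W E F -> 1 < #|F|.
Proof.
case=> S [sSW S0 SW ->]; rewrite ltnNge; apply/negP=> /(cutE sSW).
by case=> /eqP; apply/negP.
Qed.

Lemma cocycle_set1F b : ~~ cocycle E [set b].
Proof.
apply/negP=> cb; have b0 : [set b] != set0 by apply/set0Pn; exists b; rewrite set11.
by have := is_cut_card (is_cut_cocycle cb b0); rewrite cards1.
Qed.

Lemma not_bridge e : ~ bridge W E e.
Proof. by case=> _ /is_cut_card; rewrite cards1. Qed.

Lemma coparallel_copar e f : coparallel W E e f -> copar E e f.
Proof.
case=> ef [[S [_ _ _ dS]] _]; rewrite coparE //.
by apply/cocycleP; exists S.
Qed.

Lemma copar_coparallel e f : e != f -> copar E e f -> coparallel W E e f.
Proof.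
move=> ef; rewrite coparE // => cef; split=> //; split.
  by apply: is_cut_cocycle cef _; apply/set0Pn; exists e; rewrite set21.
move=> F /is_cut_card F1 /proper_card; rewrite cards2 ef.
by rewrite ltnS leqNgt F1.
Qed.

Lemma coparallel_set_sub D d :
  coparallel_set W E D -> d \in D -> D \subset copar_class E d.
Proof.
case=> sDE [_ cD] dD; apply/subsetP=> f fD; rewrite inE (subsetP sDE f fD).
by case: (eqVneq d f) => [<-|df]; [exact: coparxx | exact/coparallel_copar/cD].
Qed.

Lemma coparallel_set_copar_class e : coparallel_set W E (copar_class E e).
Proof.
have E2 := graph_card2 graphE.
split; first by apply/subsetP=> f; rewrite inE => /andP[].
split=> [f _|f g]; first exact: not_bridge.
rewrite !inE => /andP[_ cef] /andP[_ ceg] fg; apply: copar_coparallel => //.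
by apply: copar_trans E2 _ ceg; rewrite copar_sym.
Qed.

Lemma cp_classE D d : cp_class W E D -> d \in D -> D = copar_class E d.
Proof.
case=> _ cpD maxD dD; symmetry; apply: maxD; first exact: coparallel_set_copar_class.
exact: coparallel_set_sub.
Qed.

Lemma cp_class_copar_class e : e \in E -> cp_class W E (copar_class E e).
Proof.
move=> eE; have ee : e \in copar_class E e by rewrite inE eE coparxx.
split; [by apply/set0Pn; exists e | exact: coparallel_set_copar_class |].
move=> D cpD sD; apply/eqP; rewrite eqEsubset sD andbT.
exact: coparallel_set_sub (subsetP sD e ee).
Qed.
End Classes.

Section Component.
Variables (V : finType) (F : {set {set V}}) (x : V).
Hypothesis F2 : {in F, forall e : {set V}, #|e| = 2}.
Let W := component_of F x.

Lemma component_adj u v : adj F u v -> u \in W -> v \in W.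
Proof. by rewrite !inE => uv xu; apply: connect_trans xu (connect1 _). Qed.

Lemma edges_in_component e : e \in F -> e :&: W != set0 -> e \subset W.
Proof.
move=> eF /set0Pn[u]; rewrite inE => /andP[ue uW].
have /eqP/cards2P[a [b [ab de]]] := F2 eF.
have adj_ab : adj F a b by rewrite /adj -de.
have adj_ba : adj F b a by rewrite /adj setUC -de.
move: ue uW; rewrite de subUset !sub1set => /set2P[]-> uW.
  by rewrite uW (component_adj adj_ab uW).
by rewrite uW (component_adj adj_ba uW).
Qed.

Lemma graph_component : is_graph W (edges_in F W).
Proof. by move=> e; rewrite inE => /andP[/F2 e2 eW]. Qed.

Lemma delta_component (S : {set V}) : S \subset W -> delta (edges_in F W) S = delta F S.
Proof.
have sFW : edges_in F W \subset F by apply/subsetP=> e; rewrite inE => /andP[].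
move=> sSW; rewrite (delta_sub _ sFW); apply/setIidPl/subsetP=> e.
rewrite !inE => /andP[eF eS1]; rewrite eF edges_in_component //.
apply: contraTneq eS1 => eW0; suff -> : e :&: S = set0 by rewrite cards0.
by apply/eqP; rewrite -subset0 -eW0 setIS.
Qed.
End Component.

Section ComponentOfClass.
Variables (V : finType) (E : {set {set V}}) (c : {set V}) (x : V).
Hypotheses (graphE : is_graph [set: V] E) (cutE : two_edge_cut_connected [set: V] E).
Hypothesis cE : c \in E.
Let C := copar_class E c.
Let W' := component_of (E :\: C) x.
Let E' := edges_in (E :\: C) W'.

Let E2 : {in E, forall e : {set V}, #|e| = 2}. Proof. exact: graph_card2 graphE. Qed.

Let graphE' : is_graph W' E'.
Proof. by apply: graph_component => e /setDP[/E2]. Qed.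

Let sE'E : E' \subset E :\: C.
Proof. by apply/subsetP=> e; rewrite inE => /andP[]. Qed.

Lemma cocycle_component_lift F :
  cocycle E' F -> cocycle E F \/ cocycle E (symdiff [set c] F).
Proof.
case/cocycleP=> S <-; rewrite -(delta_setIW _ graphE').
rewrite delta_component; [|by move=> e /setDP[/E2]|exact: subsetIr].
rewrite (delta_sub _ (subsetDl E C)) setIDA (setIidPl (delta_subset _ _)).
apply: cocycle_setD_class E2 _ _ _; first by rewrite inE cE coparxx.
  by move=> d; rewrite inE => /andP[].
by apply/cocycleP; exists (S :&: W').
Qed.

Lemma component_cut_connected : two_edge_cut_connected W' E'.
Proof.
move=> S sSW; rewrite leq_eqVlt ltnS leqn0 cards_eq0 => /orP[/cards1P[b dS] | /eqP dS].
  have /setDP[bE bC] : b \in E :\: C.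
    by rewrite (subsetP sE'E) // -sub1set -dS delta_subset.
  have cb : cocycle E' [set b] by apply/cocycleP; exists S.
  case: (cocycle_component_lift cb) => [|cbE].
    by rewrite (negbTE (cocycle_set1F graphE cutE b)).
  by case/negP: bC; rewrite /C inE bE; exact: cbE.
have {}dS : delta (E :\: C) S = set0.
  by rewrite -dS delta_component //; move=> e /setDP[/E2].
case: (set_0Vmem S) => [->|[y yS]]; [by left | right].
have clS := closed_connect (closed_delta0 dS).
have xS : x \in S by have := subsetP sSW y yS; rewrite inE => /clS ->.
by apply/eqP; rewrite eqEsubset sSW; apply/subsetP=> z; rewrite inE => /clS <-.
Qed.

Lemma cp_class_component_sub D : cp_class W' E' D -> D \subset E.
Proof.
by case=> _ [sDE' _] _; apply: subset_trans sDE' (subset_trans sE'E (subsetDl _ _)).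
Qed.

Lemma copar_class_sub_cp_class D d :
  cp_class W' E' D -> d \in D -> copar_class E d \subset D.
Proof.
move=> clD dD; have dE' : d \in E' by case: clD => _ [/subsetP->].
rewrite (cp_classE graphE' component_cut_connected clD dD).
apply/subsetP=> f; rewrite !in_copar_class => /andP[_ cdf].
have := cocycleI (subset_trans sE'E (subsetDl E C)) cdf.
case: (boolP (f \in E')) => fE' /=.
  have sdE' : symdiff [set d] [set f] \subset E'.
    by apply/subsetP=> z; rewrite in_symdiff !in_set1; case: eqP => [-> _ | _ /= /eqP->].
  by rewrite (setIidPl sdE').
(* Otherwise the cut {d, f} of G would restrict to the bridge {d} of G'. *)
suff -> : symdiff [set d] [set f] :&: E' = [set d].
  by rewrite (negbTE (cocycle_set1F graphE' component_cut_connected d)).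
have df : d != f by apply: contraNneq fE' => <-.
apply/setP=> z; rewrite in_setI in_symdiff !in_set1.
have [->|_] := eqVneq z d; first by rewrite (negbTE df) dE'.
by have [->|] := eqVneq z f; rewrite ?(negbTE fE') ?andbF.
Qed.

Lemma copar_component_triangle e f g :
  copar E' e f -> copar E' e g -> ~~ copar E e f -> ~~ copar E e g -> copar E f g.
Proof.
move=> cef ceg nef neg.
have [/(negP nef)[]|cef'] := cocycle_component_lift cef.
have [/(negP neg)[]|ceg'] := cocycle_component_lift ceg.
congr cocycle: (cocycle_symdiff E2 cef' ceg'); apply/setP=> z; rewrite !in_symdiff.
by rewrite addbACA addbb /= addbACA addbb.
Qed.

Lemma cp_class_component_split D e f : cp_class W' E' D -> e \in D -> f \in D ->
  ~~ copar E e f -> D = copar_class E e :|: copar_class E f.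
Proof.
move=> clD eD fD nef.
have sDe := copar_class_sub_cp_class clD eD; have sDf := copar_class_sub_cp_class clD fD.
apply/eqP; rewrite eqEsubset subUset sDe sDf !andbT.
have DE := subsetP (cp_class_component_sub clD).
have defD := cp_classE graphE' component_cut_connected clD eD.
apply/subsetP=> g gD; rewrite in_setU !in_copar_class (DE g gD) /=.
case: (boolP (copar E e g)) => //= neg.
move: fD gD; rewrite defD !in_copar_class => /andP[_ cef] /andP[_ ceg].
exact: copar_component_triangle cef ceg nef neg.
Qed.
End ComponentOfClass.

Theorem mainTheorem4 (V : finType) (E C C' : {set {set V}}) (x : V) :
  is_graph [set: V] E ->
  two_edge_connected [set: V] E ->
  cp_class [set: V] E C ->
  edges_in (E :\: C) (component_of (E :\: C) x) != set0 ->
  cp_class (component_of (E :\: C) x) (edges_in (E :\: C) (component_of (E :\: C) x)) C' ->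
  ~ cp_class [set: V] E C' ->
  exists C1 C2 : {set {set V}},
    [/\ cp_class [set: V] E C1, cp_class [set: V] E C2,
        [disjoint C1 & C2] & C' = C1 :|: C2].
Proof.
(* That G' has an edge already follows from C' being a nonempty class of G'. *)
move=> graphE /two_edge_cut_connected_of cutE clC _ clC' notC'.
have [c cC] : exists c, c \in C by case: clC => /set0Pn.
have cE : c \in E by case: clC => _ [/subsetP->].
have defC := cp_classE graphE cutE clC cC; subst C.
have C'E := subsetP (cp_class_component_sub clC').
have [e eC'] : exists e, e \in C' by case: clC' => /set0Pn.
have /subsetPn[f fC' fNe] : ~~ (C' \subset copar_class E e).
  apply/negP=> sC'e; apply: notC'.
  suff -> : C' = copar_class E e by apply: cp_class_copar_class; rewrite ?C'E.
  by apply/eqP; rewrite eqEsubset sC'e (copar_class_sub_cp_class graphE cutE cE clC').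
have nef : ~~ copar E e f by rewrite in_copar_class C'E in fNe.
exists (copar_class E e), (copar_class E f); split.
- by apply: cp_class_copar_class; rewrite ?C'E.
- by apply: cp_class_copar_class; rewrite ?C'E.
- exact: copar_class_disjoint (graph_card2 graphE) nef.
- exact: (cp_class_component_split graphE cutE cE clC' eC' fC' nef).
Qed.
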